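(* Let $\langle R,<,+,\cdot\rangle$ be an ordered field, and let $E\subseteq R^2\times R^2$ be the relation $E(x,y,a,b)\iff y=ax+b$. Let $m\in R_{\ge0}$. Then $|E\cap B|=\Omega(n^{4/3})$ for finite $m$-distant $n$-grids $B\subseteq R^2\times R^2$; that is, there is a constant $c>0$ such that for arbitrarily large $n\in\mathbb N$ there is an $m$-distant $n$-grid $B=B_1\times B_2\subseteq R^2\times R^2$ with $|E\cap B|\ge c\,n^{4/3}$.
   Context: For $x\in R^2$, $|x|=\max(|x_1|,|x_2|)$. A set $X\subseteq R^2$ is $m$-distant if $|x-y|>m$ for all distinct $x,y\in X$. An $n$-grid in $R^2\times R^2$ is $B=B_1\times B_2$ with $B_1,B_2\subseteq R^2$ and $|B_1|=|B_2|=n$; it is $m$-distant if $B_1$ and $B_2$ are $m$-distant. *)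

From HB Require Import structures.
From mathcomp Require Import all_boot all_order all_algebra.
From mathcomp Require Export finmap.
Set Implicit Arguments. Unset Strict Implicit. Unset Printing Implicit Defensive.
Import Order.TTheory GRing.Theory Num.Theory.
Local Open Scope ring_scope.
Local Open Scope fset_scope.

Definition supdist (R : realFieldType) (x y : R * R) : R :=
  Num.max `|x.1 - y.1| `|x.2 - y.2|.

Definition m_distant (R : realFieldType) (m : R) (X : {fset R * R}) : Prop :=
  forall x y, x \in X -> y \in X -> x != y -> m < supdist x y.

Definition E_rel (R : realFieldType) (p q : R * R) : bool :=
  p.2 == (q.1 * p.1 + q.2)%R.

Definition E_count (R : realFieldType) (B1 B2 : {fset R * R}) : nat :=
  #|` [fset pq in B1 `*` B2 | E_rel pq.1 pq.2] |.

From HB Require Import structures.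
From mathcomp Require Import all_boot all_order all_algebra finmap.
From mathcomp Require Import ring lra zify.
Set Implicit Arguments. Unset Strict Implicit. Unset Printing Implicit Defensive.
Import Order.TTheory GRing.Theory Num.Theory.
Local Open Scope ring_scope.
Local Open Scope fset_scope.

(* Take B1 = B2 = the grid {(s x, s^2 y) : x < k, y < 2 k^2} with step s = m + 1,
   a set of n = 2 k^3 points that is m-distant.  Scaling the abscissa by s and the
   ordinate by s^2 preserves incidences: the point (s i, s^2 (a i + b)) lies on
   the line with parameters (s a, s^2 b).  Each of the k^4 triples (i, a, b) with
   i, a < k and b < k^2 therefore yields an incidence inside the grid, and
   k^4 = (n / 2)^(4/3). *)

Lemma card_imfset_finType {T : finType} {K : choiceType} {f : T -> K} :
  injective f -> #|` [fset f x | x : T]| = #|T|.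
Proof. by move=> f_inj; rewrite card_imfset //= cardE. Qed.

Section ScaledGrid.
Variables (R : realFieldType) (s : R).
Hypothesis s_ge1 : 1 <= s.

Definition grid_pt (p : nat * nat) : R * R := (s * p.1%:R, s ^+ 2 * p.2%:R).

Definition grid (k l : nat) : {fset R * R} :=
  [fset grid_pt (val ij.1, val ij.2) | ij : 'I_k * 'I_l].

Let s_gt0 : 0 < s. Proof. exact: lt_le_trans ltr01 s_ge1. Qed.

Lemma grid_pt_inj : injective grid_pt.
Proof.
have s_neq0 : s != 0 by rewrite gt_eqF.
have s2_neq0 : s ^+ 2 != 0 by rewrite expf_neq0.
move=> [a b] [c d] [/(mulfI s_neq0)/eqP + /(mulfI s2_neq0)/eqP].
by rewrite !eqr_nat => /eqP -> /eqP ->.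
Qed.

Lemma dist_nat_ge1 (i j : nat) : i != j -> 1 <= `|i%:R - j%:R : R|.
Proof.
have dist_ge1 (a b : nat) : (b < a)%N -> 1 <= `|a%:R - b%:R : R|.
  by move=> lt_ba; rewrite -(natrB R (ltnW lt_ba)) ger0_norm ?ler0n // ler1n subn_gt0.
by case: (ltngtP i j) => // [lt_ij|lt_ji] _; [rewrite distrC|]; exact: dist_ge1.
Qed.

Lemma grid_pt_sep (p q : nat * nat) : p != q -> s <= supdist (grid_pt p) (grid_pt q).
Proof.
move: p q => [a b] [c d]; rewrite xpair_eqE negb_and => /orP neq_pq.
rewrite /supdist /= -!mulrBr !normrM (gtr0_norm s_gt0) -expr2 le_max.
case: neq_pq => [neq_ac|neq_bd]; first by rewrite ler_pMr ?dist_nat_ge1.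
have s_le_s2 : s <= s ^+ 2 by rewrite expr2 ler_pMr.
apply/orP; right; apply: le_trans s_le_s2 _.
by rewrite ler_pMr ?exprn_gt0 ?dist_nat_ge1.
Qed.

Lemma mem_grid (k l i j : nat) :
  (i < k)%N -> (j < l)%N -> grid_pt (i, j) \in grid k l.
Proof. by move=> lt_ik lt_jl; apply/imfsetP; exists (Ordinal lt_ik, Ordinal lt_jl). Qed.

Lemma card_grid (k l : nat) : #|` grid k l| = (k * l)%N.
Proof.
rewrite card_imfset_finType ?card_prod ?card_ord //.
by move=> [i j] [i' j'] /grid_pt_inj [/val_inj -> /val_inj ->].
Qed.

Lemma grid_distant (m : R) (k l : nat) : m < s -> m_distant m (grid k l).
Proof.
move=> lt_ms _ _ /imfsetP [[i j] _ ->] /imfsetP [[i' j'] _ ->] neq.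
apply: lt_le_trans lt_ms (grid_pt_sep _).
by apply: contraNneq neq => ->.
Qed.

Lemma E_rel_grid_pt (i a b : nat) :
  E_rel (grid_pt (i, (a * i + b)%N)) (grid_pt (a, b)).
Proof. by rewrite /E_rel /=; apply/eqP; rewrite natrD natrM; ring. Qed.

Lemma E_count_grid (k l : nat) :
  (k ^ 2 * l <= E_count (grid k (k ^ 2 + l)) (grid k (k ^ 2 + l)))%N.
Proof.
pose incidence (t : 'I_k * 'I_k * 'I_l) :=
  let: (i, a, b) := t in (grid_pt (val i, (a * i + b)%N), grid_pt (val a, val b)).
have incidence_inj : injective incidence.
  move=> [[i a] b] [[i' a'] b'] /eqP; rewrite xpair_eqE.
  case/andP => /eqP/grid_pt_inj [eq_i _] /eqP/grid_pt_inj [eq_a eq_b].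
  by rewrite (val_inj eq_i) (val_inj eq_a) (val_inj eq_b).
have -> : (k ^ 2 * l = #|{: 'I_k * 'I_k * 'I_l}|)%N.
  by rewrite !card_prod !card_ord mulnn.
rewrite -(card_imfset_finType incidence_inj) /E_count fsubset_leq_card //.
apply/fsubsetP => _ /imfsetP [[[i a] b] _ ->] /=.
have lt_b : (b < k ^ 2 + l)%N by have := ltn_ord b; lia.
have lt_aib : (a * i + b < k ^ 2 + l)%N.
  by have := ltn_ord a; have := ltn_ord i; have := ltn_ord b; nia.
by rewrite !inE /= !mem_grid ?E_rel_grid_pt.
Qed.

End ScaledGrid.

Lemma four_thirds_bound (k : nat) :
  (1 / 4 : rat) ^+ 3 * (k * (k ^ 2 + k ^ 2))%:R ^+ 4 <= (k ^ 2 * k ^ 2)%:R ^+ 3.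
Proof.
rewrite !(natrM, natrD, natrX); set x : rat := k%:R.
have x12_ge0 : 0 <= x ^+ 12 by rewrite exprn_ge0 ?ler0n.
have -> : (1 / 4) ^+ 3 * (x * (x ^+ 2 + x ^+ 2)) ^+ 4 = x ^+ 12 / 4 by field.
have -> : (x ^+ 2 * x ^+ 2) ^+ 3 = x ^+ 12 by ring.
lra.
Qed.

(* |E ∩ B| >= c n^(4/3)  is stated as  |E ∩ B|^3 >= c^3 n^4  (c > 0 rational). *)
Theorem proposition3p15 (R : realFieldType) (m : R) (hm : 0 <= m) :
  exists c : rat, 0 < c /\
    forall N : nat, exists n : nat, (N <= n)%N /\
      exists B1 B2 : {fset R * R},
        #|` B1| = n /\ #|` B2| = n /\ m_distant m B1 /\ m_distant m B2 /\
        c ^+ 3 * (n%:R) ^+ 4 <= ((E_count B1 B2)%:R : rat) ^+ 3.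
Proof.
exists (1 / 4); split => // N.
pose k := N.+1; pose B := grid (m + 1)%R k (k ^ 2 + k ^ 2).
have s_ge1 : 1 <= (m + 1)%R by lra.
have B_distant : m_distant m B by apply: grid_distant; lra.
exists (k * (k ^ 2 + k ^ 2))%N; split; first by rewrite /k; nia.
exists B, B; rewrite !(card_grid s_ge1); do 4 split => //.
apply: le_trans (four_thirds_bound k) _.
by rewrite lerXn2r ?nnegrE ?ler0n // ler_nat (E_count_grid s_ge1).
Qed.
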